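(* Let $a\ge1$ and $n\ge0$ be integers. Then $\hom_{\Bbbk\mathbf{FA}}(\overline P^{\otimes n},\overline P^{\otimes a})$ is isomorphic, as a $\Bbbk\mathfrak S_n\otimes\Bbbk\mathfrak S_a^{\mathrm{op}}$-module, to the kernel of the total restriction map $$\Bbbk\mathbf{FS}(\mathbf a,\mathbf n)\longrightarrow\bigoplus_{i=1}^a\Bbbk\mathbf{FS}(\mathbf a\setminus\{i\},\mathbf n),$$ whose $i$-th component sends $[f]$ (for a surjection $f:\mathbf a\to\mathbf n$) to $[f|_{\mathbf a\setminus\{i\}}]$ if the restriction $f|_{\mathbf a\setminus\{i\}}$ is surjective, and to $0$ otherwise. (Here $\mathfrak S_n$ acts by postcomposition and $\mathfrak S_a$ by precomposition.)
   Context: Let $\Bbbk$ be a field. $\mathbf{FA}$ denotes the category of finite sets and all maps, and $\mathbf{FI}$, $\mathbf{FS}$, $\mathbf{FB}$ its wide subcategories of injections, surjections and bijections respectively; $\mathbf n=\{1,\dots,n\}$ for $n\in\mathbb N$ ($\mathbf 0=\emptyset$), and $\mathfrak S_n$ is the symmetric group. For a category $\mathcal C$, $\Bbbk\mathcal C(X,Y)$ is the $\Bbbk$-vector space with basis $\mathcal C(X,Y)$. A $\Bbbk\mathbf{FA}$-module is a functor from $\mathbf{FA}$ to $\Bbbk$-vector spaces (these form the abelian category $\mathcal F(\mathbf{FA})$); $\otimes$ denotes the pointwise tensor product over $\Bbbk$, and $\hom_{\Bbbk\mathbf{FA}}$ denotes natural transformations. $P^{\mathbf{FA}}_{\mathbf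 n}:=\Bbbk\mathbf{FA}(\mathbf n,-)$, so $P^{\mathbf{FA}}_{\mathbf n}(X)\cong\Bbbk[X]^{\otimes n}$ (where $\Bbbk[X]$ has basis $\{[x]:x\in X\}$), with the right $\mathfrak S_n$-action by precomposition, equivalently place permutation of tensor factors; write $P^{\mathbf{FA}}:=P^{\mathbf{FA}}_{\mathbf 1}$. Let $\overline{\Bbbk}$ be the functor with value $\Bbbk$ on non-empty sets (all maps acting by the identity) and $0$ on $\emptyset$, and $\Bbbk_{\mathbf 0}$ the functor with value $\Bbbk$ on $\emptyset$ and $0$ on non-empty sets. $\overline P$ is the kernel of the surjection $P^{\mathbf{FA}}\to\overline\Bbbk$, $[x]\mapsto 1$; thus $\overline P(X)=\{\sum_x a_x[x]:\sum_x a_x=0\}$. For $n\ge1$, $\overline P^{\otimes n}$ is the $n$-fold pointwise tensor power, a subfunctor of $P^{\mathbf{FA}}_{\mathbf n}$ stable under the place-permutation right action of $\mathfrak S_n$; by convention $\overline P^{\otimes 0}:=\overline\Bbbk$. The action of $\mathfrak S_a$ on $\hom_{\Bbbk\mathbf{FA}}(\overline P^{\otimes n},\overline P^{\otimes a})$ comes from the place-permutation action on $\overline P^{\otimes a}$, and that of $\mathfrak S_n$ from the one on $\overline P^{\otimes n}$. *)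

From HB Require Import structures.
From mathcomp Require Import all_boot all_order all_algebra all_fingroup.
Set Implicit Arguments. Unset Strict Implicit. Unset Printing Implicit Defensive.
Import GRing.Theory.
Local Open Scope ring_scope.

(* Skeleton of FA: objects 'I_m (m : nat), morphisms {ffun 'I_m -> 'I_k}. *)
Notation V K n m := ({ffun {ffun 'I_n -> 'I_m} -> K^o}) (only parsing).
Notation C K a n := ({ffun {ffun 'I_a -> 'I_n} -> K^o}) (only parsing).

Section Defs.
Variable K : fieldType.

(* P^{FA}_n(m) = K[m]^{(x) n}: basis = tuples s : n -> m, i.e. [s 1]⊗...⊗[s n]. *)


Definition push n m k (g : {ffun 'I_m -> 'I_k}) (v : V K n m) : V K n k :=
  [ffun t => \sum_(s : {ffun 'I_n -> 'I_m} | [ffun j => g (s j)] == t) v s].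

Definition inPbar m (v : {ffun 'I_m -> K}) : Prop := \sum_i v i = 0.

Definition ptensor n m (vs : 'I_n -> {ffun 'I_m -> K}) : V K n m :=
  [ffun s : {ffun 'I_n -> 'I_m} => \prod_(j < n) vs j (s j)].

(* Pbar^{(x) n}(m): span of pure tensors of elements of Pbar(m) for n >= 1;
   convention Pbar^{(x) 0} = kbar (0 on the empty set, K otherwise). *)
Definition inPbarT n m (x : V K n m) : Prop :=
  if n is 0 then (m = 0%N -> x = 0)
  else exists (r : nat) (vs : 'I_r -> 'I_n -> {ffun 'I_m -> K}),
         (forall i j, inPbar (vs i j)) /\ x = \sum_(i < r) ptensor (vs i).

(* A natural transformation Pbar^{(x) n} -> Pbar^{(x) a}, represented by a
   family of maps on the ambient spaces; only the values on Pbar^{(x) n}(m)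
   matter (two families agreeing there are the same natural transformation). *)
Definition NatTr n a (eta : forall m, V K n m -> V K a m) : Prop :=
  [/\ forall m x, inPbarT x -> inPbarT (eta m x),
      forall m (c : K) (x y : V K n m), inPbarT x -> inPbarT y ->
        eta m (c *: x + y) = c *: eta m x + eta m y
    & forall m k (g : {ffun 'I_m -> 'I_k}) (x : V K n m), inPbarT x ->
        eta k (push g x) = push g (eta m x)].

Definition sameNat n a (eta eta' : forall m, V K n m -> V K a m) : Prop :=
  forall m (x : V K n m), inPbarT x -> eta m x = eta' m x.

(* place permutation (right action, basis [s] |-> [s o tau]) *)
Definition rperm n m (tau : {perm 'I_n}) (x : V K n m) : V K n m :=
  [ffun t : {ffun 'I_n -> 'I_m} => x [ffun j => t ((tau^-1)%g j)]].

Definition actL n a (sigma : {perm 'I_n}) (eta : forall m, V K n m -> V K a m) :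
  forall m, V K n m -> V K a m := fun m x => eta m (rperm sigma x).
Definition actR n a (eta : forall m, V K n m -> V K a m) (tau : {perm 'I_a}) :
  forall m, V K n m -> V K a m := fun m x => rperm tau (eta m x).

(* k FS(a,n): coefficient vectors on maps a -> n supported on surjections *)


Definition surjb a n (f : {ffun 'I_a -> 'I_n}) : bool := [forall y, exists j, f j == y].
Definition surj_off a n (i : 'I_a) (f : {ffun 'I_a -> 'I_n}) : bool :=
  [forall y, exists j, (j != i) && (f j == y)].
(* a map a\{i} -> n encoded as a map a -> option n with value None exactly at i *)
Definition res a n (i : 'I_a) (f : {ffun 'I_a -> 'I_n}) : {ffun 'I_a -> option 'I_n} :=
  [ffun j => if j == i then None else Some (f j)].

Definition resmap a n (c : C K a n) :
  {ffun 'I_a -> {ffun {ffun 'I_a -> option 'I_n} -> K}} :=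
  [ffun i : 'I_a => [ffun h : {ffun 'I_a -> option 'I_n} =>
     \sum_(f : {ffun 'I_a -> 'I_n} | surjb f && surj_off i f && (res i f == h)) c f]].

Definition inKer a n (c : C K a n) : Prop :=
  (forall f, ~~ surjb f -> c f = 0) /\ resmap c = 0.

Definition postL a n (sigma : {perm 'I_n}) (c : C K a n) : C K a n :=
  [ffun h : {ffun 'I_a -> 'I_n} => c [ffun j => (sigma^-1)%g (h j)]].
Definition preR a n (c : C K a n) (tau : {perm 'I_a}) : C K a n :=
  [ffun h : {ffun 'I_a -> 'I_n} => c [ffun j => h ((tau^-1)%g j)]].

End Defs.

From HB Require Import structures.
From mathcomp Require Import all_boot all_order all_algebra all_fingroup.
Set Implicit Arguments. Unset Strict Implicit. Unset Printing Implicit Defensive.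
Import GRing.Theory.
Local Open Scope ring_scope.

(* A natural transformation [eta : Pbar^{(x) n} -> Pbar^{(x) a}] is determined by
   its value on [univ n = ([1] - [0]) (x) ... (x) ([n] - [0])] in
   [Pbar^{(x) n}(n+1)], since every pure tensor of elements of [Pbar] is a
   linear combination of images of [univ n].  An element of [K[m]^{(x) a}] lies
   in [Pbar^{(x) a}(m)] iff all its contractions [\sum_y w (.., y, ..)] vanish,
   and such an element is determined by its coefficients at the tuples avoiding
   one point; for [eta (univ n)] and the point [0] these coefficients are
   indexed by the maps [a -> n], which gives [natcoef eta].  Naturality along
   the maps of [n+1] merging a point into [0] shows that [natcoef eta] vanishes
   off surjections and, through the vanishing of contractions, lies in the
   kernel of the restriction map.  Conversely, [c] in that kernel defines
   [eta_c x = \sum_f c_f f^* x], the kernel condition being exactly what makes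
   the contractions of [eta_c x] vanish.  For [n = 0] both sides are zero, as
   [Pbar^{(x) a}(1) = 0] when [a >= 1]. *)

Definition fupd (A : finType) (B : Type) (t : {ffun A -> B}) (i : A) (y : B) :
  {ffun A -> B} := [ffun j => if j == i then y else t j].

Section FunUpdate.
Variables (A : finType) (B : Type).
Implicit Types (t : {ffun A -> B}) (i : A).

Lemma fupdE t i y j : fupd t i y j = if j == i then y else t j.
Proof. by rewrite ffunE. Qed.

Lemma fupd_at t i y : fupd t i y i = y.
Proof. by rewrite fupdE eqxx. Qed.

Lemma fupd_fupd t i y z : fupd (fupd t i y) i z = fupd t i z.
Proof. by apply/ffunP => j; rewrite !fupdE; case: eqP. Qed.

Lemma fupd_id t i : fupd t i (t i) = t.
Proof. by apply/ffunP => j; rewrite fupdE; case: eqP => // ->. Qed.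

End FunUpdate.

Lemma fupd_eq (A : finType) (B : eqType) (t : {ffun A -> B}) i z :
  (fupd t i z == t) = (t i == z).
Proof. by apply/eqP/eqP => [<-|<-]; [rewrite fupd_at | exact: fupd_id]. Qed.

Section Tensors.
Variable K : fieldType.

Lemma ffunZE n m (c : K) (x : V K n m) s : (c *: x) s = c * x s.
Proof. by rewrite ffunE. Qed.

Definition basis_vec m (y : 'I_m) : {ffun 'I_m -> K} := [ffun z => (z == y)%:R].

Definition push_vec m k (g : {ffun 'I_m -> 'I_k}) (w : {ffun 'I_m -> K}) :
  {ffun 'I_k -> K} := [ffun y => \sum_(x | g x == y) w x].

Lemma sum_indicator (I : finType) (P : pred I) i0 :
  \sum_(i | P i) ((i == i0)%:R : K) = (P i0)%:R.
Proof.
rewrite big_mkcond (bigD1 i0) //= eqxx big1 ?addr0 => [|i /negbTE ->].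
  by case: (P i0).
by case: (P i).
Qed.

Lemma prod_eq_ffun (A : finType) m (t t' : {ffun A -> 'I_m}) :
  \prod_j ((t j == t' j)%:R : K) = (t == t')%:R.
Proof.
case: (boolP [forall j, t j == t' j]) => [/forallP Ht|].
  have -> : t = t' by apply/ffunP => j; apply/eqP.
  by rewrite eqxx big1 // => j _; rewrite eqxx.
rewrite negb_forall => /existsP [j Hj].
rewrite (bigD1 j) //= (negbTE Hj) mul0r.
by case: eqP => // Ett'; rewrite Ett' eqxx in Hj.
Qed.

Lemma push_vec_basis m k (g : {ffun 'I_m -> 'I_k}) y :
  push_vec g (basis_vec y) = basis_vec (g y).
Proof.
apply/ffunP => z; rewrite !ffunE.
under eq_bigr do rewrite ffunE.
by rewrite sum_indicator eq_sym.
Qed.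

Lemma push_vecB m k (g : {ffun 'I_m -> 'I_k}) w1 w2 :
  push_vec g (w1 - w2) = push_vec g w1 - push_vec g w2.
Proof. by apply/ffunP => z; rewrite !ffunE -sumrB; apply: eq_bigr => x _; rewrite !ffunE. Qed.

Lemma inPbar_basisB m (y b : 'I_m) : inPbar (basis_vec y - basis_vec b).
Proof.
rewrite /inPbar; under eq_bigr do rewrite !ffunE.
by rewrite sumrB !(sum_indicator xpredT) subrr.
Qed.

Lemma eq_ptensor n m (vs ws : 'I_n -> {ffun 'I_m -> K}) :
  vs =1 ws -> ptensor vs = ptensor ws.
Proof.
by move=> Evw; apply/ffunP => s; rewrite !ffunE; apply: eq_bigr => j _; rewrite Evw.
Qed.

Lemma push_ptensor n m k (g : {ffun 'I_m -> 'I_k}) (vs : 'I_n -> {ffun 'I_m -> K}) :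
  push g (ptensor vs) = ptensor (fun j => push_vec g (vs j)).
Proof.
apply/ffunP => t; rewrite !ffunE.
under [RHS]eq_bigr do rewrite ffunE.
rewrite bigA_distr_big_dep.
apply: eq_big => [s|s _]; last by rewrite ffunE.
apply/eqP/familyP => [<- j|Hs]; first by rewrite ffunE -topredE /=.
by apply/ffunP => j; rewrite ffunE; apply/eqP; have := Hs j; rewrite -topredE.
Qed.

Lemma push0 n m k (g : {ffun 'I_m -> 'I_k}) : push g (0 : V K n m) = 0.
Proof. by apply/ffunP => t; rewrite !ffunE big1 // => s _; rewrite ffunE. Qed.

Lemma push_sum n m k (g : {ffun 'I_m -> 'I_k}) (I : Type) (r : seq I) (c : I -> K)
    (F : I -> V K n m) :
  push g (\sum_(i <- r) c i *: F i) = \sum_(i <- r) c i *: push g (F i).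
Proof.
apply/ffunP => t; rewrite ffunE sum_ffunE.
under eq_bigr do rewrite sum_ffunE.
rewrite exchange_big; apply: eq_bigr => i _.
by rewrite ffunZE ffunE mulr_sumr; apply: eq_bigr => s _; rewrite ffunZE.
Qed.

Lemma inPbarT0 n m : inPbarT (0 : V K n m).
Proof.
case: n => [//|n]; exists 0%N, (fun _ _ => 0); split; first by case.
by rewrite big_ord0.
Qed.

Lemma inPbarT_ptensor n m (vs : 'I_n.+1 -> {ffun 'I_m -> K}) :
  (forall j, inPbar (vs j)) -> inPbarT (ptensor vs).
Proof. by move=> Hvs; exists 1%N, (fun _ => vs); rewrite big_ord1. Qed.

Lemma inPbarT_add n m (x y : V K n m) : inPbarT x -> inPbarT y -> inPbarT (x + y).
Proof.
case: n x y => [|n] x y; first by move=> Hx Hy m0; rewrite Hx ?Hy ?addr0.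
move=> [r1 [vs1 [H1 ->]]] [r2 [vs2 [H2 ->]]].
exists (r1 + r2)%N, (fun i => match split i with inl i1 => vs1 i1 | inr i2 => vs2 i2 end).
split; first by move=> i j; case: (split i).
rewrite big_split_ord /=; congr (_ + _); apply: eq_bigr => i _.
  by rewrite (unsplitK (inl i)).
by rewrite (unsplitK (inr i)).
Qed.

Lemma inPbarT_scale n m (c : K) (x : V K n m) : inPbarT x -> inPbarT (c *: x).
Proof.
case: n x => [|n] x; first by move=> Hx m0; rewrite Hx ?scaler0.
move=> [r [vs [Hvs ->]]].
pose cvs i j := if j == ord0 then [ffun y => c * vs i j y] else vs i j.
exists r, cvs; split.
  move=> i j; rewrite /cvs; case: (j == ord0) => //; rewrite /inPbar.
  by under eq_bigr do rewrite ffunE; rewrite -mulr_sumr Hvs mulr0.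
rewrite scaler_sumr; apply: eq_bigr => i _; apply/ffunP => s.
by rewrite ffunZE !ffunE !big_ord_recl /= ffunE mulrA.
Qed.

Lemma inPbarT_sum n m (I : Type) (r : seq I) (P : pred I) (F : I -> V K n m) :
  (forall i, P i -> inPbarT (F i)) -> inPbarT (\sum_(i <- r | P i) F i).
Proof. by move=> HF; apply: big_ind => //; [exact: inPbarT0 | exact: inPbarT_add]. Qed.

End Tensors.

Section Contractions.
Variable K : fieldType.

Definition contr_vanish a m (w : V K a m) : Prop :=
  forall i t, \sum_y w (fupd t i y) = 0.

Lemma contr_vanishB a m (v w : V K a m) :
  contr_vanish v -> contr_vanish w -> contr_vanish (v - w).
Proof.
move=> Hv Hw i t; under eq_bigr do rewrite !ffunE.
by rewrite sumrB Hv Hw subrr.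
Qed.

Lemma inPbarT_contr_vanish a m (w : V K a.+1 m) : inPbarT w -> contr_vanish w.
Proof.
move=> [r [vs [Hvs ->]]] i t.
under eq_bigr do rewrite sum_ffunE.
rewrite exchange_big big1 // => k _.
under eq_bigr do rewrite ffunE (bigD1 i) //= fupd_at.
under eq_bigr => y _ do under eq_bigr => j /negbTE Hj do rewrite fupdE Hj.
by rewrite -big_distrl /= Hvs mul0r.
Qed.

(* Induction on the number of coordinates equal to [b]: a vanishing contraction
   at such a coordinate expresses [w t] through tuples hitting [b] less often. *)
Lemma contr_vanish_eq0 a m (w : V K a m) (b : 'I_m) :
  contr_vanish w ->
  (forall t : {ffun 'I_a -> 'I_m}, (forall j, t j != b) -> w t = 0) -> w = 0.
Proof.
move=> Hc Havoid.
suff Hk k (t : {ffun 'I_a -> 'I_m}) : (#|[pred j | t j == b]| <= k)%N -> w t = 0.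
  by apply/ffunP => t; rewrite ffunE (Hk _ t (leqnn _)).
elim: k t => [|k IH] t Hk.
  apply: Havoid => j; apply/negP => Hj.
  by move: Hk; rewrite leqn0 => /eqP/card0_eq/(_ j); rewrite inE Hj.
case: (pickP [pred j | t j == b]) => [i /= /eqP Hi | Hnone]; last first.
  by apply: Havoid => j; have := Hnone j; rewrite /= => ->.
have := Hc i t; rewrite (bigD1 b) //= -Hi fupd_id => /eqP.
rewrite addrC addr_eq0 big1 => [|y Hy]; first by rewrite eq_sym oppr_eq0 => /eqP.
apply: IH; rewrite -ltnS; apply: leq_trans Hk.
rewrite [X in (_ < X)%N](cardD1 i) inE /= Hi eqxx add1n ltnS.
apply: subset_leq_card; apply/subsetP => j; rewrite !inE fupdE.
by case: (j =P i) => [->|//]; rewrite -Hi (negbTE Hy).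
Qed.

Lemma contr_vanish_inPbarT a m (w : V K a.+1 m) : contr_vanish w -> inPbarT w.
Proof.
case: m w => [|m] w Hc.
  have -> : w = 0 by apply/ffunP => t; case: (t ord0).
  exact: inPbarT0.
pose W := \sum_(t : {ffun 'I_a.+1 -> 'I_m.+1} | [forall j, t j != ord0])
           w t *: ptensor (fun j => basis_vec K (t j) - basis_vec K ord0).
have HW : inPbarT W.
  apply: inPbarT_sum => t _; apply/inPbarT_scale/inPbarT_ptensor => j.
  exact: inPbar_basisB.
suff /eqP : w - W = 0 by rewrite subr_eq0 => /eqP ->.
apply: (contr_vanish_eq0 (b := ord0)); first exact/contr_vanishB/inPbarT_contr_vanish.
move=> t Ht; rewrite !ffunE sum_ffunE.
have Ht' : [forall j, t j != ord0] by apply/forallP.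
rewrite (bigD1 t) //= big1 => [|t' /andP [_ Ht't]]; rewrite ffunZE ffunE.
  under eq_bigr do rewrite !ffunE (negbTE (Ht _)) subr0.
  by rewrite prod_eq_ffun eqxx mulr1 addr0 subrr.
under eq_bigr do rewrite !ffunE (negbTE (Ht _)) subr0.
by rewrite prod_eq_ffun eq_sym (negbTE Ht't) mulr0.
Qed.

Lemma inPbarT_contrP a m (w : V K a.+1 m) : inPbarT w <-> contr_vanish w.
Proof. by split; [exact: inPbarT_contr_vanish | exact: contr_vanish_inPbarT]. Qed.

Definition liftf (A : finType) n (f : {ffun A -> 'I_n}) : {ffun A -> 'I_n.+1} :=
  [ffun j => lift ord0 (f j)].

Lemma liftf_inj (A : finType) n : injective (@liftf A n).
Proof.
move=> f f' /ffunP Eff'; apply/ffunP => j.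
by have := Eff' j; rewrite !ffunE => /lift_inj.
Qed.

Lemma liftf_fupd (A : finType) n i (f : {ffun A -> 'I_n}) y :
  liftf (fupd f i y) = fupd (liftf f) i (lift ord0 y).
Proof. by apply/ffunP => j; rewrite !ffunE; case: eqP. Qed.

Lemma eq_inPbarT_liftf a m (v v' : V K a.+1 m.+1) : inPbarT v -> inPbarT v' ->
  (forall f, v (liftf f) = v' (liftf f)) -> v = v'.
Proof.
move=> /inPbarT_contr_vanish Hv /inPbarT_contr_vanish Hv' Evv'.
apply/eqP; rewrite -subr_eq0; apply/eqP.
apply: (contr_vanish_eq0 (b := ord0)); first exact: contr_vanishB.
move=> t Ht; have [f ->] : exists f : {ffun 'I_a.+1 -> 'I_m}, t = liftf f.
  case: m {v v' Hv Hv' Evv'} t Ht => [|m] t Ht.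
    by have := Ht ord0; rewrite [t ord0]ord1 eqxx.
  exists [ffun j => odflt ord0 (unlift ord0 (t j))].
  apply/ffunP => j; rewrite !ffunE; case: unliftP => [k -> //|Etj].
  by move: (Ht j); rewrite Etj eqxx.
by rewrite !ffunE Evv' subrr.
Qed.

Lemma sum_contr_vanish0 n m (x : V K n m) (j : 'I_n) (z0 : 'I_m)
    (P : pred {ffun 'I_n -> 'I_m}) :
  (forall s y, P (fupd s j y) = P s) -> (forall t, \sum_y x (fupd t j y) = 0) ->
  \sum_(s | P s) x s = 0.
Proof.
move=> HP Hc.
rewrite (partition_big (fun s : {ffun 'I_n -> 'I_m} => s j) xpredT) //=.
rewrite (eq_bigr (fun y => \sum_(s | P s && (s j == z0)) x (fupd s j y))); last first.
  move=> y _; rewrite (reindex_onto (fun s => fupd s j y) (fun s => fupd s j z0)) /=.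
    by apply: eq_bigl => s; rewrite HP fupd_at eqxx andbT fupd_fupd fupd_eq.
  by move=> s /andP [_ /eqP Hs]; rewrite fupd_fupd -Hs fupd_id.
by rewrite exchange_big big1 // => s _; exact: Hc.
Qed.

End Contractions.

Definition fcons n m (b : 'I_m) (s : {ffun 'I_n -> 'I_m}) : {ffun 'I_n.+1 -> 'I_m} :=
  [ffun z => if unlift ord0 z is Some j then s j else b].

Lemma fcons0 n m (b : 'I_m) (s : {ffun 'I_n -> 'I_m}) : fcons b s ord0 = b.
Proof. by rewrite ffunE unlift_none. Qed.

Lemma fconsS n m (b : 'I_m) (s : {ffun 'I_n -> 'I_m}) j : fcons b s (lift ord0 j) = s j.
Proof. by rewrite ffunE liftK. Qed.

Lemma fcons_liftf_image n m (s : {ffun 'I_n -> 'I_m.+1}) (A : finType)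
    (sig : {ffun A -> 'I_n.+1}) (t : {ffun A -> 'I_m}) :
  [ffun k => fcons ord0 s (sig k)] = liftf t -> forall k, exists j, s j = lift ord0 (t k).
Proof.
move=> /ffunP Est k; have := Est k; rewrite !ffunE.
case: (unlift ord0 (sig k)) => [j Hj|Ht]; first by exists j.
by have := neq_lift ord0 (t k); rewrite -Ht eqxx.
Qed.

Section Universal.
Variable K : fieldType.

Definition univ n : V K n n.+1 :=
  ptensor (fun j => basis_vec K (lift ord0 j) - basis_vec K ord0).

Lemma inPbarT_univ n : inPbarT (univ n).
Proof. by case: n => [//|n]; apply: inPbarT_ptensor => j; exact: inPbar_basisB. Qed.

Lemma push_univ n k (g : {ffun 'I_n.+1 -> 'I_k}) :
  push g (univ n) =
  ptensor (fun j => basis_vec K (g (lift ord0 j)) - basis_vec K (g ord0)).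
Proof. by rewrite push_ptensor; apply: eq_ptensor => j; rewrite push_vecB !push_vec_basis. Qed.

Lemma inPbarT_push_univ n m (g : {ffun 'I_n.+1 -> 'I_m}) : inPbarT (push g (univ n)).
Proof.
case: n g => [|n] g; first by case: m g => [|m] g //; case: (g ord0).
by rewrite push_univ; apply: inPbarT_ptensor => j; exact: inPbar_basisB.
Qed.

Lemma push_fcons_univ n m (b : 'I_m) (s : {ffun 'I_n -> 'I_m}) :
  push (fcons b s) (univ n) = ptensor (fun j => basis_vec K (s j) - basis_vec K b).
Proof. by rewrite push_univ; apply: eq_ptensor => j; rewrite fcons0 fconsS. Qed.

(* Expanding each factor as [v = \sum_y v y *: ([y] - [b])], valid since [v]
   sums to [0]. *)
Lemma ptensor_univ_decomp n m (b : 'I_m) (vs : 'I_n -> {ffun 'I_m -> K}) :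
  (forall j, inPbar (vs j)) ->
  ptensor vs =
  \sum_(s : {ffun 'I_n -> 'I_m}) (\prod_j vs j (s j)) *: push (fcons b s) (univ n).
Proof.
move=> Hvs; apply/ffunP => t; rewrite sum_ffunE ffunE.
under [RHS]eq_bigr do rewrite ffunZE push_fcons_univ ffunE -big_split /=.
rewrite -(bigA_distr_bigA (fun j y => vs j y * (basis_vec K y - basis_vec K b) (t j))).
apply: eq_bigr => j _; under eq_bigr do rewrite !ffunE mulrBr.
rewrite sumrB -big_distrl /= Hvs mul0r subr0.
rewrite (bigD1 (t j)) //= eqxx mulr1 big1 ?addr0 // => y /negbTE.
by rewrite eq_sym => ->; rewrite mulr0.
Qed.

End Universal.

Section Restriction.
Variables (a n : nat) (i : 'I_a).
Implicit Types f : {ffun 'I_a -> 'I_n}.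

Lemma surj_off_surjb f : surj_off i f -> surjb f.
Proof.
move=> /forallP Hf; apply/forallP => y.
by have /existsP [j /andP [_ Hj]] := Hf y; apply/existsP; exists j.
Qed.

Lemma surj_off_fupd f y : surj_off i (fupd f i y) = surj_off i f.
Proof. by apply: eq_forallb => z; apply: eq_existsb => j; rewrite fupdE; case: eqP. Qed.

Lemma res_fupd f y : res i (fupd f i y) = res i f.
Proof. by apply/ffunP => j; rewrite !ffunE; case: eqP. Qed.

Lemma res_eq f f' : res i f = res i f' -> forall k, k != i -> f k = f' k.
Proof. by move=> /ffunP Eff' k Hk; have := Eff' k; rewrite !ffunE (negbTE Hk) => -[]. Qed.

Lemma res_fibre f0 f y : surj_off i f0 ->
  surjb f && surj_off i f && (res i f == res i f0) && (f i == y) = (f == fupd f0 i y).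
Proof.
move=> Hf0; apply/idP/eqP => [/andP [/andP [_ /eqP Ef] /eqP Hfi] | ->].
  apply/ffunP => k; rewrite fupdE; case: eqP => [->|/eqP Hk]; first exact: Hfi.
  exact: res_eq Ef k Hk.
have Hs : surj_off i (fupd f0 i y) by rewrite surj_off_fupd.
by rewrite (surj_off_surjb Hs) Hs res_fupd fupd_at !eqxx.
Qed.

End Restriction.

Lemma fcons_fibre_surj_off a n i (f0 : {ffun 'I_a -> 'I_n}) (s : {ffun 'I_n -> 'I_n.+2})
    (sig : {ffun 'I_a -> 'I_n.+1}) :
  surj_off i f0 ->
  (forall j, (s j == lift ord0 (lift ord0 j)) || (s j == lift ord0 ord0)) ->
  [ffun k => fcons ord0 s (sig k)] != liftf (fupd (liftf f0) i ord0).
Proof.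
move=> /forallP Hf0 Hs; apply/negP => /eqP /fcons_liftf_image hit.
case: (boolP [exists j, s j == lift ord0 ord0]) => [/existsP [j /eqP Hj]|]; last first.
  rewrite negb_exists => /forallP Hnone; have [j Hj] := hit i.
  by have := Hnone j; rewrite Hj fupd_at eqxx.
have /existsP [k /andP [Hki /eqP Hk]] := Hf0 j.
have [j' Hj'] := hit k; rewrite fupdE (negbTE Hki) ffunE Hk in Hj'.
have := Hs j'; rewrite Hj' => /orP [/eqP/lift_inj/lift_inj Ej | /eqP/lift_inj/eqP]; last first.
  by rewrite eq_sym (negbTE (neq_lift _ _)).
by move: Hj'; rewrite -Ej Hj => /lift_inj/eqP; rewrite (negbTE (neq_lift _ _)).
Qed.

Definition natcoef (K : fieldType) n a (eta : forall m, V K n m -> V K a m) : C K a n :=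
  [ffun f => eta n.+1 (univ K n) (liftf f)].

Section NaturalTransformations.
Variables (K : fieldType) (n a : nat).
(* [m] must stay an explicit argument of [eta], as in [NatTr]. *)
Unset Implicit Arguments.
Variable eta : forall m, V K n m -> V K a m.
Set Implicit Arguments.
Hypothesis eta_nat : NatTr eta.

Lemma nat_eq0 m : eta m 0 = 0.
Proof.
case: eta_nat => _ eta_lin _.
have := eta_lin m 1 0 0 (inPbarT0 _ _ _) (inPbarT0 _ _ _).
by rewrite !scale1r addr0 => /(congr1 (fun z => z - eta m 0)); rewrite subrr addrK.
Qed.

Lemma nat_sum m (I : Type) (r : seq I) (c : I -> K) (F : I -> V K n m) :
  (forall i, inPbarT (F i)) ->
  eta m (\sum_(i <- r) c i *: F i) = \sum_(i <- r) c i *: eta m (F i).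
Proof.
move=> HF; elim: r => [|i r IH]; first by rewrite !big_nil nat_eq0.
case: eta_nat => _ eta_lin _; rewrite !big_cons eta_lin ?IH //.
by apply: inPbarT_sum => j _; exact: inPbarT_scale.
Qed.

Lemma nat_push_univ k (g : {ffun 'I_n.+1 -> 'I_k}) :
  eta k (push g (univ K n)) = push g (eta _ (univ K n)).
Proof. by case: eta_nat => _ _; apply; exact: inPbarT_univ. Qed.

Lemma inPbarT_nat_univ : inPbarT (eta n.+1 (univ K n)).
Proof. by case: eta_nat => + _ _; apply; exact: inPbarT_univ. Qed.

Lemma nat_ptensor m (b : 'I_m) (vs : 'I_n -> {ffun 'I_m -> K}) :
  (forall j, inPbar (vs j)) ->
  eta m (ptensor vs) =
  \sum_(s : {ffun 'I_n -> 'I_m}) (\prod_j vs j (s j)) *: push (fcons b s) (eta _ (univ K n)).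
Proof.
move=> Hvs; rewrite (ptensor_univ_decomp b Hvs) nat_sum => [|s]; last exact: inPbarT_push_univ.
by apply: eq_bigr => s _; rewrite nat_push_univ.
Qed.

(* [g] merges [y+1] into [0], killing the [y]-th factor of [univ n]; since [f]
   misses [y], [liftf f] is alone in its fibre under [g]. *)
Lemma natcoef_nonsurj f : ~~ surjb f -> natcoef eta f = 0.
Proof.
rewrite /surjb negb_forall => /existsP [y]; rewrite negb_exists => /forallP Hy.
pose g : {ffun 'I_n.+1 -> 'I_n.+1} := [ffun z => if z == lift ord0 y then ord0 else z].
have push_g0 : push g (univ K n) = 0.
  rewrite push_univ; apply/ffunP => s; rewrite !ffunE (bigD1 y) //= !ffunE eqxx.
  by rewrite subrr mul0r.
have := nat_push_univ g; rewrite push_g0 nat_eq0 => /ffunP/(_ (liftf f)).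
rewrite !ffunE => ->; rewrite (big_pred1 (liftf f)) // => s /=.
apply/eqP/eqP => [/ffunP Es|->]; apply/ffunP => j.
  have := Es j; rewrite !ffunE; case: eqP => [_ Esj|//].
  by have := neq_lift ord0 (f j); rewrite -Esj eqxx.
by rewrite !ffunE; case: eqP => // /lift_inj Efj; have := Hy j; rewrite Efj eqxx.
Qed.

(* Push [univ n] forward along [z |-> z+1] and expand it with base point [0]:
   evaluated at [liftf (fupd (liftf f0) i 0)], every term of the expansion
   vanishes by [fcons_fibre_surj_off]. *)
Lemma nat_univ_surj_off i f0 :
  surj_off i f0 -> eta _ (univ K n) (fupd (liftf f0) i ord0) = 0.
Proof.
move=> Hf0; set t0 := fupd (liftf f0) i ord0.
pose incl : {ffun 'I_n.+1 -> 'I_n.+2} := [ffun z => lift ord0 z].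
pose vs (j : 'I_n) := basis_vec K (incl (lift ord0 j)) - basis_vec K (incl ord0).
have Evs : push incl (univ K n) = ptensor vs by rewrite push_univ.
have := nat_ptensor ord0 (fun j => inPbar_basisB K (incl (lift ord0 j)) (incl ord0)).
rewrite -/vs -Evs nat_push_univ // => /ffunP/(_ (liftf t0)).
rewrite ffunE (big_pred1 t0) => [->|s /=]; last first.
  have -> : [ffun j => incl (s j)] = liftf s by apply/ffunP => k; rewrite !ffunE.
  by rewrite (inj_eq (@liftf_inj _ _)).
rewrite sum_ffunE big1 // => s _; rewrite ffunZE [push _ _ _]ffunE.
have [->|Hvs] := eqVneq (\prod_j vs j (s j)) 0; first by rewrite mul0r.
rewrite [X in _ * X]big_pred0 ?mulr0 // => sig; apply/negbTE/fcons_fibre_surj_off => // j.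
move: Hvs; rewrite (bigD1 j) //= mulf_eq0 negb_or => /andP [+ _]; rewrite !ffunE.
by case: (s j == _); case: (s j == _); rewrite ?subrr ?eqxx.
Qed.

Lemma rperm_univ (sig : {perm 'I_n}) :
  rperm sig (univ K n) = push [ffun z => lift_perm ord0 ord0 sig z] (univ K n).
Proof.
rewrite push_univ; apply/ffunP => t; rewrite !ffunE.
rewrite [LHS](reindex_inj (@perm_inj _ sig)); apply: eq_bigr => j _.
by rewrite !ffunE lift_perm_id lift_perm_lift permK.
Qed.

Lemma natcoef_postL sig : natcoef (actL sig eta) = postL sig (natcoef eta).
Proof.
apply/ffunP => f; rewrite !ffunE /actL rperm_univ nat_push_univ // ffunE.
rewrite (big_pred1 (liftf [ffun k => (sig^-1)%g (f k)])) // => s /=.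
apply/eqP/eqP => [/ffunP Es|->]; apply/ffunP => k; last first.
  by rewrite !ffunE lift_perm_lift permKV.
have := Es k; rewrite !ffunE => /(canRL (permK _)) ->.
by rewrite lift_permV lift_perm_lift.
Qed.

End NaturalTransformations.

Lemma natcoef_preR (K : fieldType) n a (eta : forall m, V K n m -> V K a m) tau :
  natcoef (actR eta tau) = preR (natcoef eta) tau.
Proof.
apply/ffunP => f; rewrite /actR !ffunE; congr (eta _ _ _).
by apply/ffunP => j; rewrite !ffunE.
Qed.

Section CoefficientsOfNat.
Variable K : fieldType.

(* The fibre of [res i] over [h] is [{fupd f0 i y | y}], so summing [natcoef eta]
   over it is a contraction of [eta (univ n)] missing only the term at [0],
   which vanishes by [nat_univ_surj_off]. *)
Lemma natcoef_resmap n a (eta : forall m, V K n m -> V K a.+1 m) :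
  NatTr eta -> resmap (natcoef eta) = 0.
Proof.
move=> eta_nat; apply/ffunP => i; apply/ffunP => h; rewrite !ffunE.
case: (pickP (fun f => surjb f && surj_off i f && (res i f == h)))
  => [f0 /andP [/andP [_ Hf0] /eqP <-] | none]; last by rewrite big_pred0.
rewrite (partition_big (fun f : {ffun 'I_a.+1 -> 'I_n} => f i) xpredT) //=.
rewrite (eq_bigr (fun y => natcoef eta (fupd f0 i y))) => [|y _]; last first.
  by rewrite (big_pred1 (fupd f0 i y)) // => f; exact: res_fibre.
have := inPbarT_contr_vanish (inPbarT_nat_univ eta_nat) i (liftf f0).
rewrite big_ord_recl /= nat_univ_surj_off // add0r => Hc; rewrite -[RHS]Hc.
by apply: eq_bigr => y _; rewrite ffunE liftf_fupd.
Qed.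

Lemma natcoef_inKer n a (eta : forall m, V K n m -> V K a.+1 m) :
  NatTr eta -> inKer (natcoef eta).
Proof. by move=> eta_nat; split; [exact: natcoef_nonsurj | exact: natcoef_resmap]. Qed.

Lemma inPbarT_at1_eq0 a (w : V K a.+1 1) : inPbarT w -> w = 0.
Proof.
move=> /inPbarT_contr_vanish Hw; apply/ffunP => t; rewrite ffunE.
have := Hw ord0 t; rewrite big_ord1.
suff -> : fupd t ord0 ord0 = t by [].
by apply/ffunP => j; rewrite fupdE; case: eqP => // ->; rewrite (ord1 (t ord0)).
Qed.

(* [Pbar^{(x) 0}(m.+1)] is the image of [Pbar^{(x) 0}(1)], and
   [Pbar^{(x) a.+1}(1) = 0]. *)
Lemma nat_from0_eq0 a (eta : forall m, V K 0 m -> V K a.+1 m) m (x : V K 0 m) :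
  NatTr eta -> inPbarT x -> eta m x = 0.
Proof.
move=> eta_nat; case: m x => [|m] x Hx; first by rewrite (Hx erefl) nat_eq0.
have ffun0_eq (T : Type) (f g : {ffun 'I_0 -> T}) : f = g by apply/ffunP => [[]].
pose x1 : V K 0 1 := [ffun _ => x [ffun i : 'I_0 => ord0]].
pose g : {ffun 'I_1 -> 'I_m.+1} := [ffun _ => ord0].
have -> : x = push g x1.
  apply/ffunP => t; rewrite [RHS]ffunE (big_pred1 [ffun i : 'I_0 => ord0]) => [|s].
    by rewrite ffunE (ffun0_eq _ t [ffun i : 'I_0 => ord0]).
  by rewrite /= (ffun0_eq _ [ffun j => g (s j)] t) eqxx; apply/esym/eqP; exact: ffun0_eq.
case: eta_nat => Hin _ Hpush; have Hx1 : inPbarT (eta 1 x1) by exact: Hin.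
by rewrite Hpush // (inPbarT_at1_eq0 Hx1) push0.
Qed.

Lemma natcoef_inj n a (eta eta' : forall m, V K n m -> V K a.+1 m) :
  NatTr eta -> NatTr eta' -> natcoef eta = natcoef eta' -> sameNat eta eta'.
Proof.
case: n eta eta' => [|n] eta eta' eta_nat eta'_nat Ecoef m x Hx.
  by rewrite !nat_from0_eq0.
have Euniv : eta _ (univ K n.+1) = eta' _ (univ K n.+1).
  apply: eq_inPbarT_liftf; [exact: inPbarT_nat_univ | exact: inPbarT_nat_univ |].
  by move=> f; have /ffunP/(_ f) := Ecoef; rewrite !ffunE.
case: m x Hx => [|m] x [r [vs [Hvs ->]]]; first by apply/ffunP => t; case: (t ord0).
have Hptensor i : inPbarT (ptensor (vs i)) by exact: inPbarT_ptensor.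
rewrite (eq_bigr (fun i => 1 *: ptensor (vs i))) => [|i _]; last by rewrite scale1r.
rewrite !nat_sum //; apply: eq_bigr => i _.
by rewrite (nat_ptensor eta_nat ord0 (Hvs i)) (nat_ptensor eta'_nat ord0 (Hvs i)) Euniv.
Qed.

End CoefficientsOfNat.

Section NatOfCoefficients.
Variable K : fieldType.

Definition precomp a n m (f : {ffun 'I_a -> 'I_n}) (x : V K n m) : V K a m :=
  [ffun t => \sum_(s : {ffun 'I_n -> 'I_m} | [ffun j => s (f j)] == t) x s].

Definition nat_of_coef a n (c : C K a n) : forall m, V K n m -> V K a m :=
  fun m x => \sum_f c f *: precomp f x.

Lemma sum_fibre (I J : finType) (h : I -> J) (P : pred J) (F : I -> K) :
  \sum_(j | P j) \sum_(i | h i == j) F i = \sum_(i | P (h i)) F i.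
Proof.
rewrite [RHS](partition_big h P) //=; apply: eq_bigr => j Pj.
by apply: eq_bigl => i; case: (h i =P j) => [->|_]; rewrite ?Pj ?andbF.
Qed.

Lemma precomp_push a n m k (f : {ffun 'I_a -> 'I_n}) (g : {ffun 'I_m -> 'I_k}) x :
  precomp f (push g x) = push g (precomp f x).
Proof.
apply/ffunP => t; rewrite !ffunE.
under eq_bigr do rewrite ffunE.
under [RHS]eq_bigr do rewrite ffunE.
rewrite (sum_fibre (fun s : {ffun 'I_n -> 'I_m} => [ffun j => g (s j)])
          (fun s' : {ffun 'I_n -> 'I_k} => [ffun j => s' (f j)] == t)).
rewrite (sum_fibre (fun s : {ffun 'I_n -> 'I_m} => [ffun j => s (f j)])
          (fun t' : {ffun 'I_a -> 'I_m} => [ffun j => g (t' j)] == t)).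
by apply: eq_bigl => s /=; congr (_ == _); apply/ffunP => j; rewrite !ffunE.
Qed.

Lemma precompDZ a n m (f : {ffun 'I_a -> 'I_n}) (c0 : K) (x y : V K n m) :
  precomp f (c0 *: x + y) = c0 *: precomp f x + precomp f y.
Proof.
apply/ffunP => t; rewrite !ffunE scaler_sumr -big_split /=.
by apply: eq_bigr => s _; rewrite !ffunE.
Qed.

Lemma nat_of_coef_push a n (c : C K a n) m k (g : {ffun 'I_m -> 'I_k}) (x : V K n m) :
  nat_of_coef c (push g x) = push g (nat_of_coef c x).
Proof. by rewrite /nat_of_coef push_sum; apply: eq_bigr => f _; rewrite precomp_push. Qed.

Lemma nat_of_coefDZ a n (c : C K a n) m (c0 : K) (x y : V K n m) :
  nat_of_coef c (c0 *: x + y) = c0 *: nat_of_coef c x + nat_of_coef c y.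
Proof.
rewrite /nat_of_coef scaler_sumr -big_split /=; apply: eq_bigr => f _.
by rewrite precompDZ scalerDr !scalerA mulrC.
Qed.

Lemma precomp_univ_liftf a n (f f' : {ffun 'I_a -> 'I_n}) :
  surjb f -> precomp f (univ K n) (liftf f') = (f == f')%:R.
Proof.
move=> /forallP Hf; rewrite ffunE.
pose s0 : {ffun 'I_n -> 'I_n.+1} := [ffun j => lift ord0 j].
rewrite (eq_bigr (fun s => (s == s0)%:R)) => [|s /eqP /ffunP Es]; last first.
  rewrite ffunE -prod_eq_ffun; apply: eq_bigr => j _.
  have /existsP [k /eqP Hk] := Hf j.
  have Esj : s j = lift ord0 (f' k) by have := Es k; rewrite !ffunE Hk.
  by rewrite !ffunE Esj [lift _ _ == ord0]eq_sym (negbTE (neq_lift _ _)) subr0.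
rewrite sum_indicator; congr (_%:R).
have -> : [ffun j => s0 (f j)] = liftf f by apply/ffunP => j; rewrite !ffunE.
by rewrite (inj_eq (@liftf_inj _ _)).
Qed.

Lemma natcoef_nat_of_coef a n (c : C K a n) : inKer c -> natcoef (nat_of_coef c) = c.
Proof.
move=> [Hsurj _]; apply/ffunP => f'; rewrite ffunE /nat_of_coef sum_ffunE.
rewrite (eq_bigr (fun f => c f * (f == f')%:R)) => [|f _]; last first.
  rewrite ffunZE; case: (boolP (surjb f)) => Hf; first by rewrite precomp_univ_liftf.
  by rewrite Hsurj // !mul0r.
by rewrite (bigD1 f') //= eqxx mulr1 big1 ?addr0 // => f /negbTE ->; rewrite mulr0.
Qed.

Lemma sum_precomp_fupd a n m (f : {ffun 'I_a -> 'I_n}) (x : V K n m) i t :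
  \sum_y precomp f x (fupd t i y) =
  \sum_(s : {ffun 'I_n -> 'I_m} | [forall k, (k != i) ==> (s (f k) == t k)]) x s.
Proof.
under eq_bigr do rewrite ffunE.
rewrite (partition_big (fun s : {ffun 'I_n -> 'I_m} => s (f i)) xpredT) //=.
apply: eq_bigr => y _; apply: eq_bigl => s.
apply/eqP/andP => [/ffunP Es|[/forallP Hs /eqP Hy]].
  split; last by have := Es i; rewrite !ffunE eqxx => ->.
  apply/forallP => k; apply/implyP => Hk.
  by have := Es k; rewrite !ffunE (negbTE Hk) => ->.
apply/ffunP => k; rewrite !ffunE; case: (k =P i) => [->|/eqP Hk] //.
by apply/eqP; have := Hs k; rewrite Hk.
Qed.

Lemma sum_precomp_fupd_res a n m (f f' : {ffun 'I_a -> 'I_n}) (x : V K n m) i t :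
  res i f = res i f' ->
  \sum_y precomp f x (fupd t i y) = \sum_y precomp f' x (fupd t i y).
Proof.
move=> Eres; rewrite !sum_precomp_fupd; apply: eq_bigl => s; apply: eq_forallb => k.
by case: (boolP (k != i)) => //= Hk; rewrite (res_eq Eres Hk).
Qed.

(* If [f] misses [y0] off [i], the summation condition does not involve the
   coordinate [y0] of [s], along which [x] contracts to zero. *)
Lemma sum_precomp_fupd_nonsurj a n m (f : {ffun 'I_a -> 'I_n}) (x : V K n m) i t :
  contr_vanish x -> ~~ surj_off i f -> \sum_y precomp f x (fupd t i y) = 0.
Proof.
move=> Hx; rewrite /surj_off negb_forall => /existsP [y0].
rewrite negb_exists => /forallP Hy0.
case: m x t Hx => [|m] x t Hx; first by rewrite big_ord0.
rewrite sum_precomp_fupd; apply: (sum_contr_vanish0 (j := y0) ord0) => [s y|]; last exact: Hx.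
apply: eq_forallb => k; case: (boolP (k != i)) => //= Hk.
by rewrite fupdE; have := Hy0 k; rewrite Hk /= => /negbTE ->.
Qed.

(* Split the contraction along the fibres of [res i]: off surjections it
   vanishes termwise, and on a fibre it is constant times the [(i, h)] entry of
   [resmap c]. *)
Lemma nat_of_coef_contr a n m (c : C K a.+1 n) (x : V K n m) :
  inKer c -> contr_vanish x -> contr_vanish (nat_of_coef c x).
Proof.
move=> [_ Hres] Hx i t; set A := fun f => \sum_y precomp f x (fupd t i y).
have -> : \sum_y nat_of_coef c x (fupd t i y) = \sum_f c f * A f.
  under eq_bigr do rewrite sum_ffunE.
  rewrite exchange_big; apply: eq_bigr => f _; rewrite /A mulr_sumr.
  by apply: eq_bigr => y _; rewrite ffunZE.
rewrite (bigID (surj_off i)) /= [X in _ + X]big1 ?addr0 => [|f Hf]; last first.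
  by rewrite /A sum_precomp_fupd_nonsurj ?mulr0.
rewrite (partition_big (res i) xpredT) //= big1 // => h _.
case: (pickP (fun f => surj_off i f && (res i f == h))) => [f0 /andP [_ /eqP Hf0]|none].
  rewrite (eq_bigr (fun f => c f * A f0)) => [|f /andP [_ /eqP Hf]]; last first.
    by rewrite /A (sum_precomp_fupd_res _ _ (_ : res i f = res i f0)) // Hf Hf0.
  rewrite -big_distrl /= (eq_bigl (fun f => surjb f && surj_off i f && (res i f == h))).
    by have /ffunP/(_ i)/ffunP/(_ h) := Hres; rewrite !ffunE => ->; rewrite mul0r.
  by move=> f; case: (boolP (surj_off i f)) => Hf; rewrite ?andbF //= (surj_off_surjb Hf).
by rewrite big_pred0.
Qed.

Lemma NatTr_nat_of_coef a n (c : C K a.+1 n) : inKer c -> NatTr (nat_of_coef c).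
Proof.
move=> Hc; split=> [m x Hx|m c0 x y _ _|m k g x _]; last 2 first.
- exact: nat_of_coefDZ.
- exact: nat_of_coef_push.
case: n c Hc x Hx => [|n] c Hc x Hx.
  by rewrite /nat_of_coef big1 => [|f]; [exact: inPbarT0 | case: (f ord0)].
by apply/inPbarT_contrP/nat_of_coef_contr => //; exact: inPbarT_contr_vanish.
Qed.

End NatOfCoefficients.

Theorem mainTheorem7 (K : fieldType) (a n : nat) : (1 <= a)%N ->
  exists Phi : (forall m, V K n m -> V K a m) -> C K a n,
  [/\ (* Phi is well defined on natural transformations Pbar^n -> Pbar^a *)
      (forall eta eta', NatTr eta -> NatTr eta' -> sameNat eta eta' ->
         Phi eta = Phi eta'),
      (* K-linear *)
      (forall (c : K) eta eta', NatTr eta -> NatTr eta' ->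
         Phi (fun m x => c *: eta m x + eta' m x) = c *: Phi eta + Phi eta'),
      (* lands in the kernel of the total restriction map *)
      (forall eta, NatTr eta -> inKer (Phi eta)),
      (* injective on natural transformations, surjective onto the kernel *)
      (forall eta eta', NatTr eta -> NatTr eta' -> Phi eta = Phi eta' ->
         sameNat eta eta') /\
      (forall c, inKer c -> exists eta, NatTr eta /\ Phi eta = c)
    & (* S_n-equivariant and S_a^op-equivariant *)
      (forall (sigma : {perm 'I_n}) eta, NatTr eta ->
         Phi (actL sigma eta) = postL sigma (Phi eta)) /\
      (forall (tau : {perm 'I_a}) eta, NatTr eta ->
         Phi (actR eta tau) = preR (Phi eta) tau)].
Proof.
case: a => [//|a] _; exists (@natcoef K n a.+1); split.
- move=> eta eta' _ _ Eeta; apply/ffunP => f.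
  by rewrite !ffunE Eeta //; exact: inPbarT_univ.
- by move=> c eta eta' _ _; apply/ffunP => f; rewrite !ffunE.
- exact: natcoef_inKer.
- split; first exact: natcoef_inj.
  move=> c Hc; exists (nat_of_coef c).
  by split; [exact: NatTr_nat_of_coef | exact: natcoef_nat_of_coef].
- split=> [sig eta eta_nat | tau eta _]; [exact: natcoef_postL | exact: natcoef_preR].
Qed.
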